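(* Let $\phi$ be the Brier scoring rule, whose negative entropy is $h(p)=\|p\|^2-1$, so that for random vectors $U,V$ in $\mathbb{R}^K$, $\mathrm{Var}_h(U\mid V)=\mathbb{E}[\|U\|^2\mid V]-\|\mathbb{E}[U\mid V]\|^2$. Let $C:=\mathbb{E}[Q\mid S]$, $S_B$ a binned version of $S$ and $C_B:=\mathbb{E}[Q\mid S_B]$. Then $$\underbrace{\mathbb{E}\big[\|S_B-C_B\|^2\big]}_{\mathrm{CL}(S_B)}=\underbrace{\mathbb{E}\big[\|S-C\|^2\big]}_{\mathrm{CL}(S)}\;\underbrace{-\;\mathbb{E}\big[\mathrm{Var}_h(S-C\mid S_B)\big]}_{\mathrm{CL}_{\mathrm{induced}}(S,S_B)}.$$
   Context: Let $(X,Y)$ be jointly distributed with $X\in\mathcal{X}$ and $Y\in\{e_1,\dots,e_K\}$ (one-hot vectors of $\mathbb{R}^K$); $\Delta_K$ is the probability simplex; $Q\in\Delta_K$ with $Q_k:=P(Y=e_k\mid X)$; $S=f(X)\in\Delta_K$ for a classifier $f$. Binned classifier: given a partition $\{\mathcal{B}_j\}_{1\le j\le J}$ of $\Delta_K$, $S_B$ equals $\mathbb{E}[S\mid S\in\mathcal{B}_j]$ on $\{S\in\mathcal{B}_j\}$. $\|\cdot\|$ is the Euclidean norm. *)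

From HB Require Import structures.
From mathcomp Require Import all_boot all_order all_algebra.
From mathcomp Require Import all_classical all_reals all_analysis.
Set Implicit Arguments. Unset Strict Implicit. Unset Printing Implicit Defensive.
Import Order.TTheory GRing.Theory Num.Theory.
Local Open Scope classical_set_scope.
Local Open Scope ring_scope.

Section Defs.
Variables (R : realType) (K : nat).

(* Borel sigma-algebra on R^K (= product sigma-algebra generated by coordinates) *)
Definition vec_measurable : set (set ('I_K -> R)) :=
  <<s \bigcup_(k in [set: 'I_K])
        preimage_set_system setT (fun p : 'I_K -> R => p k) (@measurable _ R) >>.

Definition simplex : set ('I_K -> R) :=
  [set p | (forall k, 0 <= p k) /\ \sum_(k < K) p k = 1].

Definition vsub (p q : 'I_K -> R) : 'I_K -> R := fun k => p k - q k.

Definition sqnorm (p : 'I_K -> R) : R := \sum_(k < K) p k ^+ 2.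

Definition simplex_partition (J : nat) (B : 'I_J -> set ('I_K -> R)) : Prop :=
  [/\ forall j, vec_measurable (B j),
      forall j, B j `<=` simplex,
      forall i j, i != j -> B i `&` B j = set0 &
      simplex `<=` \bigcup_(j in [set: 'I_J]) B j].

Variables (d : measure_display) (T : measurableType d) (P : probability T R).

Definition sigma_vec (V : T -> 'I_K -> R) : set (set T) :=
  preimage_set_system setT V vec_measurable.

Definition sigma_rv (dX : measure_display) (X' : measurableType dX) (V : T -> X')
  : set (set T) := preimage_set_system setT V measurable.

Definition is_cexp (G : set (set T)) (Y Z : T -> R) : Prop :=
  [/\ forall A, measurable A -> G (setT `&` Z @^-1` A),
      P.-integrable setT (EFin \o Z) &
      forall A, G A -> (\int[P]_(x in A) (Y x)%:E = \int[P]_(x in A) (Z x)%:E)%E].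

Definition is_cexp_vec (G : set (set T)) (Y Z : T -> 'I_K -> R) : Prop :=
  forall k, is_cexp G (fun t => Y t k) (fun t => Z t k).

Definition bin_mean (S : T -> 'I_K -> R) (Bj : set ('I_K -> R)) : 'I_K -> R :=
  fun k => fine (\int[P]_(x in S @^-1` Bj) (S x k)%:E)%E / fine (P (S @^-1` Bj)).

Definition binned (J : nat) (B : 'I_J -> set ('I_K -> R)) (S : T -> 'I_K -> R)
  : T -> 'I_K -> R :=
  fun t k => \sum_(j < J) \1_(S @^-1` B j) t * bin_mean S (B j) k.

End Defs.

From HB Require Import structures.
From mathcomp Require Import all_boot all_order all_algebra.
From mathcomp Require Import all_classical all_reals all_analysis.
From mathcomp Require Import measurable_realfun.
Import Order.TTheory GRing.Theory Num.Theory numFieldNormedType.Exports.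
Local Open Scope classical_set_scope.
Local Open Scope ring_scope.

(* Each bin value of [S_B] is the mean of [S] over the bin, so [S_B] is a
   version of E[S | S_B]; since sigma(S_B) is contained in sigma(S), the tower
   property gives E[S - C | S_B] = S_B - C_B.  Hence
   E||S_B - C_B||^2 = E||E[S - C | S_B]||^2, whereas
   E[Var_h(S - C | S_B)] = E||S - C||^2 - E||E[S - C | S_B]||^2.
   As [S_B] takes finitely many values, conditional expectations given [S_B]
   are pinned down on its fibres of positive probability, which have full
   measure. *)

Lemma divfK_le (R : numFieldType) (x y : R) : 0 <= x -> x <= y -> x / y * y = x.
Proof.
move=> x0 xy; have [y0|y_neq0] := eqVneq y 0; last by rewrite divfK.
by move: xy; rewrite y0 mulr0 => x_le0; apply/esym/eqP; rewrite eq_le x_le0 x0.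
Qed.

Lemma bounded_by (T : Type) (R : realType) (A : set T) (f : T -> R) (c : R) :
  (forall x, `|f x| <= c) -> [bounded f x | x in A].
Proof.
move=> fc; apply: filterS (nbhs_pinfty_ge (num_real c)) => M cM x _.
exact: le_trans (fc x) cM.
Qed.

Section simplex.
Variables (R : realType) (K : nat) (p : 'I_K -> R).
Hypothesis simp : simplex p.

Lemma simplex_ge0 k : 0 <= p k.
Proof. by case: simp. Qed.

Lemma simplex_le1 k : p k <= 1.
Proof.
case: simp => p0 <-; rewrite (bigD1 k) //= lerDl.
by apply: sumr_ge0 => i _.
Qed.

Lemma simplex_norm_le1 k : `|p k| <= 1.
Proof. by rewrite ger0_norm ?simplex_ge0 ?simplex_le1. Qed.

End simplex.

Section vector_measurable.
Variables (R : realType) (K : nat).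

Definition vec_coord_preimages : set (set ('I_K -> R)) :=
  \bigcup_(k in [set: 'I_K])
    preimage_set_system setT (fun p : 'I_K -> R => p k) measurable.

Definition vecType := g_sigma_algebraType vec_coord_preimages.

Lemma vec_measurableE : @vec_measurable R K = @measurable _ vecType.
Proof. by []. Qed.

Lemma measurable_coord k : measurable_fun setT (fun p : vecType => p k).
Proof. by move=> _ A mA; apply: sub_sigma_algebra; exists k => //; exists A. Qed.

Lemma measurable_vec_set1 (v : vecType) : measurable [set v].
Proof.
have -> : [set v] =
    \bigcap_(k in [set: 'I_K]) (setT `&` (fun p => p k) @^-1` [set v k]).
  apply/seteqP; split => [p -> k _ //|p pv]; apply/funext => k.
  by have [] := pv k I.
apply: fin_bigcap_measurable => [|k _]; first exact: finite_finset.
exact: measurable_coord (measurable_set1 _).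
Qed.

Lemma measurable_vec_fun d (T : measurableType d) (F : T -> vecType) :
  (forall k, measurable_fun setT (fun t => F t k)) -> measurable_fun setT F.
Proof.
move=> mF; apply: (@measurability _ _ _ vecType _ _ vec_coord_preimages) => //.
move=> _ [_ [k _ [A mA <-]] <-].
by rewrite !setTI -[X in measurable X]setTI; exact: mF.
Qed.

End vector_measurable.

Section conditional_expectation_given_vector.
Context {R : realType} {K : nat} {d : measure_display} {T : measurableType d}.
Context {P : probability T R} {V : T -> 'I_K -> R}.
Implicit Types Y Z : T -> R.

Lemma measurable_sqnorm (F : T -> 'I_K -> R) :
  (forall k, measurable_fun setT (fun t => F t k)) ->
  measurable_fun setT (fun t => sqnorm (F t)).
Proof. by move=> mF; apply: measurable_sum => k; exact: measurable_funX. Qed.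

Lemma is_cexp_measurable {G : set (set T)} {Y Z} :
  G `<=` measurable -> is_cexp P G Y Z -> measurable_fun setT Z.
Proof. by move=> Gm [mZ _ _] _ A mA; exact/Gm/mZ. Qed.

Lemma sigma_vecT : sigma_vec V setT.
Proof. by exists setT; [rewrite vec_measurableE | rewrite setTI preimage_setT]. Qed.

Lemma sigma_vec_fiber v : sigma_vec V (V @^-1` [set v]).
Proof. by exists [set v]; [exact: measurable_vec_set1 | rewrite setTI]. Qed.

Lemma is_cexp_fiber_cst {Y Z t1 t2} :
  is_cexp P (sigma_vec V) Y Z -> V t1 = V t2 -> Z t1 = Z t2.
Proof.
move=> [mZ _ _] V12; have [W _ WZ] := mZ _ (measurable_set1 (Z t1)).
have [_ Wt1] : (setT `&` V @^-1` W) t1 by rewrite WZ.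
have : (setT `&` V @^-1` W) t2 by split => //=; rewrite -V12.
by rewrite WZ => -[].
Qed.

Lemma integral_is_cexp_fiber {Y Z t} :
  measurable (V @^-1` [set V t]) -> is_cexp P (sigma_vec V) Y Z ->
  (\int[P]_(x in V @^-1` [set V t]) (Y x)%:E =
   (Z t)%:E * P (V @^-1` [set V t]))%E.
Proof.
move=> mL hZ; have [_ _ ->] := hZ; last exact: (sigma_vec_fiber (V t)).
rewrite -integral_cst //; apply: eq_integral => x /[!inE] Vx.
by congr EFin; exact: is_cexp_fiber_cst hZ Vx.
Qed.

End conditional_expectation_given_vector.

Section binned_classifier.
Context {R : realType} {K J : nat} {d : measure_display} {T : measurableType d}.
Context {P : probability T R} {S : T -> 'I_K -> R} {B : 'I_J -> set ('I_K -> R)}.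
Hypothesis mS : forall k, measurable_fun setT (fun t => S t k).
Hypothesis simS : forall t, simplex (S t).
Hypothesis partB : simplex_partition B.

Local Notation SB := (binned P B S).
Local Notation b j := (bin_mean P S (B j)).

Let measurable_S : measurable_fun setT (S : T -> vecType R K).
Proof. exact: measurable_vec_fun. Qed.

Lemma measurable_cell j : measurable (S @^-1` B j).
Proof.
rewrite -[X in measurable X]setTI; apply: measurable_S => //.
by rewrite -vec_measurableE; case: partB.
Qed.

Lemma cell_exists t : exists j, B j (S t).
Proof. by case: partB => _ _ _ /(_ _ (simS t)) [j _ Sj]; exists j. Qed.

Lemma cell_unique i j p : B i p -> B j p -> i = j.
Proof.
move=> Bi Bj; have [//|ij] := eqVneq i j.
by case: partB => _ _ /(_ _ _ ij) /seteqP[/(_ p (conj Bi Bj))].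
Qed.

Lemma trivIset_cells (D : set 'I_J) : trivIset D (fun j => S @^-1` B j).
Proof. by move=> i j _ _ [t [Bi Bj]]; exact: cell_unique Bi Bj. Qed.

Lemma binnedE {t j} : B j (S t) -> SB t = b j.
Proof.
move=> Bj; apply/funext => k; rewrite /binned (bigD1 j) //= big1.
  by rewrite indicE mem_set // mul1r addr0.
move=> i ij; rewrite indicE memNset ?mul0r // => Bi.
by move/eqP: ij; apply; exact: cell_unique Bi Bj.
Qed.

Lemma binned_preimage W :
  SB @^-1` W = \big[setU/set0]_(j < J | `[< W (b j) >]) S @^-1` B j.
Proof.
rewrite -bigcup_pred; apply/seteqP; split => t /=.
  have [j Bj] := cell_exists t; rewrite (binnedE Bj) => Wb.
  by exists j => //; exact/asboolP.
by move=> [j /asboolP Wb Bj]; rewrite (binnedE Bj).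
Qed.

Lemma measurable_binned_preimage W : measurable (SB @^-1` W).
Proof.
by rewrite binned_preimage; apply: bigsetU_measurable => j _; exact: measurable_cell.
Qed.

Lemma measurable_binned_coord k : measurable_fun setT (fun t => SB t k).
Proof.
by move=> _ A _; rewrite setTI; exact: measurable_binned_preimage [set p | A (p k)].
Qed.

Lemma sigma_vec_binned_measurable : sigma_vec SB `<=` measurable.
Proof. by move=> _ [W _ <-]; rewrite setTI; exact: measurable_binned_preimage. Qed.

Lemma sigma_vec_binned_sub : sigma_vec SB `<=` sigma_vec S.
Proof.
move=> _ [W _ <-]; exists (\big[setU/set0]_(j < J | `[< W (b j) >]) B j).
  rewrite vec_measurableE; apply: bigsetU_measurable => j _.
  by case: partB => mB _ _ _; exact: mB.
by rewrite !setTI binned_preimage (big_morph _ (preimage_setU S) (preimage_set0 S)).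
Qed.

Lemma bounded_binned_fiber_cst (g : T -> R) :
  (forall t1 t2, SB t1 = SB t2 -> g t1 = g t2) -> exists c, forall t, `|g t| <= c.
Proof.
move=> gSB.
have /boolp.choice [c gc] : forall j, exists c, forall t, B j (S t) -> `|g t| <= c.
  move=> j; have [[t0 Bt0]|none] := pselect (exists t, B j (S t)).
    by exists `|g t0| => t Bt; rewrite (gSB t t0) // (binnedE Bt) (binnedE Bt0).
  by exists 0 => t Bt; exfalso; apply: none; exists t.
exists (\sum_j `|c j|) => t; have [j Bj] := cell_exists t.
rewrite (le_trans (gc j t Bj)) // (le_trans (ler_norm _)) // (bigD1 j) //= lerDl.
by apply: sumr_ge0.
Qed.

Lemma integral_binned_preimage (f : T -> R) W : measurable_fun setT f ->
  (\int[P]_(x in SB @^-1` W) (f x)%:E =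
   \sum_(j < J | `[< W (b j) >]) \int[P]_(x in S @^-1` B j) (f x)%:E)%E.
Proof.
move=> mf; rewrite binned_preimage -big_filter integral_bigsetU_EFin ?big_filter //.
- exact: measurable_cell.
- by rewrite filter_uniq // index_enum_uniq.
- exact: trivIset_cells.
- by apply/measurable_EFinP; exact: measurable_funTS.
Qed.

Lemma integral_cell_binned j k :
  (\int[P]_(x in S @^-1` B j) (S x k)%:E = \int[P]_(x in S @^-1` B j) (SB x k)%:E)%E.
Proof.
set E := S @^-1` B j; have mE : measurable E := measurable_cell j.
have -> : (\int[P]_(x in E) (SB x k)%:E = (b j k)%:E * P E)%E.
  rewrite -integral_cst //; apply: eq_integral => x /[!inE] Bx.
  by rewrite (binnedE Bx).
have I0 : (0 <= \int[P]_(x in E) (S x k)%:E)%E.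
  by apply: integral_ge0 => x _; rewrite lee_fin simplex_ge0.
have IE : (\int[P]_(x in E) (S x k)%:E <= P E)%E.
  rewrite -[leRHS]mul1e -integral_cst //; apply: ge0_le_integral => //.
  - by move=> x _; rewrite lee_fin simplex_ge0.
  - by apply/measurable_EFinP; exact: measurable_funTS.
  - by move=> x _; rewrite lee_fin simplex_le1.
have PEfin : P E \is a fin_num by rewrite fin_num_measure.
have Ifin : (\int[P]_(x in E) (S x k)%:E)%E \is a fin_num.
  by rewrite ge0_fin_numE // (le_lt_trans IE) // ltey_eq PEfin.
rewrite /bin_mean -[in RHS](fineK PEfin) -EFinM divfK_le ?fineK //.
  by rewrite fine_ge0.
exact: fine_le.
Qed.

Lemma binned_is_cexp k :
  is_cexp P (sigma_vec SB) (fun t => S t k) (fun t => SB t k).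
Proof.
split.
- move=> A mA; exists [set p | A (p k)] => //.
  by rewrite vec_measurableE -[X in measurable X]setTI; exact: measurable_coord.
- apply: measurable_bounded_integrable => //.
  + by rewrite -ge0_fin_numE ?fin_num_measure.
  + exact: measurable_binned_coord.
  + have [c Sc] : exists c, forall t, `|SB t k| <= c.
      by apply: bounded_binned_fiber_cst => t1 t2 ->.
    exact: bounded_by Sc.
- move=> _ [W _ <-]; rewrite setTI !integral_binned_preimage //.
    by apply: eq_bigr => j _; exact: integral_cell_binned.
  exact: measurable_binned_coord.
Qed.

Lemma binned_fiber_ae : {ae P, forall t, P (SB @^-1` [set SB t]) != 0%E}.
Proof.
exists (SB @^-1` [set v | P (SB @^-1` [set v]) = 0%E]); split.
- exact: measurable_binned_preimage.
- rewrite binned_preimage measure_bigsetU_ord_cond; last 2 first.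
  + by move=> j _; exact: measurable_cell.
  + exact: trivIset_cells.
  apply: big1 => j /asboolP Pb0; apply/eqP; rewrite -measure_le0 -Pb0.
  apply: le_measure; rewrite ?inE; last 2 [exact: measurable_cell|exact: measurable_binned_preimage].
  by move=> t Bt; rewrite /= (binnedE Bt).
- by move=> t /= /negP; rewrite negbK => /eqP.
Qed.

Lemma integrable_sqnorm_binned_cexp {Y M : T -> 'I_K -> R} :
  is_cexp_vec P (sigma_vec SB) Y M ->
  P.-integrable setT (EFin \o (fun t => sqnorm (M t))).
Proof.
move=> hM; apply: measurable_bounded_integrable => //.
- by rewrite -ge0_fin_numE ?fin_num_measure.
- apply: measurable_sqnorm => k.
  exact: is_cexp_measurable sigma_vec_binned_measurable (hM k).
- have [c Mc] : exists c, forall t, `|sqnorm (M t)| <= c.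
    apply: bounded_binned_fiber_cst => t1 t2 SB12; congr sqnorm.
    by apply/funext => k; exact: is_cexp_fiber_cst (hM k) SB12.
  exact: bounded_by Mc.
Qed.

Section tower.
Context {Q C CB M : T -> 'I_K -> R}.
Hypothesis hC : is_cexp_vec P (sigma_vec S) Q C.
Hypothesis hCB : is_cexp_vec P (sigma_vec SB) Q CB.
Hypothesis hM : is_cexp_vec P (sigma_vec SB) (fun t => vsub (S t) (C t)) M.

Lemma binned_residual_cexpE t :
  P (SB @^-1` [set SB t]) != 0%E -> M t = vsub (SB t) (CB t).
Proof.
move=> PL0; apply/funext => k; set L := SB @^-1` [set SB t].
have mL : measurable L := measurable_binned_preimage _.
have [_ intC intCE] := hC k.
have intS : P.-integrable L (EFin \o (fun x => S x k)).
  apply: measurable_bounded_integrable => //.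
  - by rewrite -ge0_fin_numE ?fin_num_measure.
  - exact: measurable_funTS.
  - have S_le1 x : `|S x k| <= 1 by exact: simplex_norm_le1.
    exact: bounded_by S_le1.
(* Integrate S - C over the fibre L: the three conditional expectations given
   S_B are constant on L, and Q integrates like C on L as L is in sigma(S). *)
have LE : ((M t k)%:E * P L = (SB t k)%:E * P L - (CB t k)%:E * P L)%E.
  rewrite -(integral_is_cexp_fiber mL (hM k)) -(integral_is_cexp_fiber mL (hCB k)).
  rewrite -(integral_is_cexp_fiber mL (binned_is_cexp k)).
  rewrite intCE; last exact/sigma_vec_binned_sub/sigma_vec_fiber.
  by rewrite -integralB_EFin //; exact: integrableS intC.
have PLfin : P L \is a fin_num by rewrite fin_num_measure.
apply: (mulIf (x := fine (P L))).
  by apply: contra PL0 => /eqP PL_eq0; rewrite -(fineK PLfin) PL_eq0.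
by apply: EFin_inj; rewrite /vsub mulrBl EFinB !EFinM fineK.
Qed.

Lemma integral_sqnorm_binned_residual :
  (\int[P]_x (sqnorm (vsub (SB x) (CB x)))%:E = \int[P]_x (sqnorm (M x))%:E)%E.
Proof.
have mCB k := is_cexp_measurable sigma_vec_binned_measurable (hCB k).
have mM k := is_cexp_measurable sigma_vec_binned_measurable (hM k).
apply: ae_eq_integral => //.
- apply/measurable_EFinP; apply: measurable_sqnorm => k.
  exact: measurable_funB (measurable_binned_coord k) (mCB k).
- by apply/measurable_EFinP; exact: measurable_sqnorm.
- apply: filterS binned_fiber_ae => t PL0 _.
  by rewrite (binned_residual_cexpE t PL0).
Qed.

End tower.

End binned_classifier.

Theorem proposition5 (R : realType) (K J : nat)
  (d : measure_display) (T : measurableType d) (P : probability T R)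
  (dX : measure_display) (Xs : measurableType dX)
  (X : T -> Xs) (Y : T -> 'I_K) (f : Xs -> 'I_K -> R)
  (Q C C_B M : T -> 'I_K -> R) (Wn : T -> R)
  (B : 'I_J -> set ('I_K -> R)) :
  measurable_fun setT X ->
  (forall k, measurable (Y @^-1` [set k])) ->
  (forall k, measurable_fun setT (fun x => f x k)) ->
  (forall x, simplex (f x)) ->
  (* Q_k = P(Y = e_k | X) *)
  is_cexp_vec P (sigma_rv X) (fun t k => \1_(Y @^-1` [set k]) t) Q ->
  simplex_partition B ->
  let S := fun t => f (X t) in
  let S_B := binned P B S in
  (* C = E[Q | S],  C_B = E[Q | S_B] *)
  is_cexp_vec P (sigma_vec S) Q C ->
  is_cexp_vec P (sigma_vec S_B) Q C_B ->
  (* Var_h(S - C | S_B) = Wn - ||M||^2 with Wn = E[||S-C||^2 | S_B], M = E[S - C | S_B] *)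
  is_cexp P (sigma_vec S_B) (fun t => sqnorm (vsub (S t) (C t))) Wn ->
  is_cexp_vec P (sigma_vec S_B) (fun t => vsub (S t) (C t)) M ->
  (\int[P]_x (sqnorm (vsub (S_B x) (C_B x)))%:E =
   \int[P]_x (sqnorm (vsub (S x) (C x)))%:E
   - \int[P]_x (Wn x - sqnorm (M x))%:E)%E.
Proof.
move=> mX _ mf simf _ partB S S_B hC hCB hW hM.
have mS k : measurable_fun setT (fun t => S t k) := measurableT_comp (mf k) mX.
have simS t : simplex (S t) := simf (X t).
have [_ intW /(_ setT sigma_vecT) intWE] := hW.
have intM := integrable_sqnorm_binned_cexp mS simS partB hM.
rewrite (integral_sqnorm_binned_residual mS simS partB hC hCB hM) intWE.
have Wfin := integrable_fin_num measurableT intW.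
have Mfin := integrable_fin_num measurableT intM.
by rewrite integralB_EFin // oppeB ?fin_num_adde_defr // addeA subee // add0e.
Qed.
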